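(* Let $X$ be a real Banach space. The following statements are equivalent. (1) $X$ is rotund. (2) $S_X$ is uniquely remotal on $X\setminus\{0\}$. (3) $S_X$ is uniquely remotal on $X\setminus B_X$. (4) $S_X$ is uniquely remotal on $B_X\setminus\{0\}$. (5) $S_X$ is uniquely remotal on $B_X\setminus kB_X$ for any (equivalently, for some) $0<k<1$. (6) $S_X$ is uniquely remotal on $S_X$.
   Context: $B_X$ and $S_X$ denote the closed unit ball and unit sphere of $X$. For a non-empty bounded $F\subseteq X$ and $x\in X$, $r(F,x)=\sup\{\|x-y\|:y\in F\}$ and $Q_F(x)=\{y\in F:\|x-y\|= r(F,x)\}$ (the set of farthest points). $F$ is uniquely remotal on a set $A$ if $Q_F(x)$ is a singleton for every $x\in A$. $X$ is rotund if $\|\frac{x_1+x_2}{2}\|<1$ whenever $x_1,x_2\in S_X$, $x_1\neq x_2$. *)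

From HB Require Import structures.
From mathcomp Require Import all_boot all_order all_algebra.
From mathcomp Require Import all_classical all_reals all_analysis.
Unset Implicit Arguments. Unset Printing Implicit Defensive.
Import Order.TTheory GRing.Theory Num.Theory.
Import numFieldNormedType.Exports.
Local Open Scope classical_set_scope.
Local Open Scope ring_scope.

Section Remotal.
Variables (R : realType) (X : normedModType R).

Definition unit_ball : set X := [set x | `|x| <= 1].
Definition unit_sphere : set X := [set x | `|x| = 1].

Definition rad (F : set X) (x : X) : R := sup [set `|x - y| | y in F].

Definition farthest (F : set X) (x : X) : set X :=
  [set y | F y /\ `|x - y| = rad F x].

Definition uniquely_remotal (F A : set X) : Prop :=
  forall x, A x -> exists y, farthest F x = [set y].

Definition rotund : Prop :=
  forall x1 x2 : X, unit_sphere x1 -> unit_sphere x2 -> x1 != x2 ->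
    `|(2 ^-1 : R) *: (x1 + x2)| < 1.

End Remotal.

Arguments rad {R X} F x.
Arguments farthest {R X} F x.
Arguments uniquely_remotal {R X} F A.

From Pilot Require Import Defs.
From HB Require Import structures.
From mathcomp Require Import all_boot all_order all_algebra.
From mathcomp Require Import all_classical all_reals all_analysis.
From mathcomp Require Import lra.
Import Order.TTheory GRing.Theory Num.Theory.
Import numFieldNormedType.Exports.
Local Open Scope classical_set_scope.
Local Open Scope ring_scope.

(* For x != 0 the radius r(S_X, x) is ||x|| + 1, attained at -x/||x||, and
   any farthest point y satisfies ||x/||x|| - y|| = 2; in a rotund space this
   forces y = -x/||x||.  Conversely, if X is not rotund, S_X contains a segment
   [z, w] with z != w, and both z and w are farthest from -t(z + w) for every
   t > 0; such points exist on every sphere of positive radius.  Each set in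
   the list lies in X \ {0} and contains a sphere of positive radius. *)

Section FarthestPointsOfTheUnitSphere.
Context {R : realType} {X : normedModType R}.
Local Notation SX := (unit_sphere R X).

Lemma rad_unit_sphere (x : X) : x != 0 -> Defs.rad SX x = `|x| + 1.
Proof.
move=> x0; have xp : 0 < `|x| by rewrite normr_gt0.
set v := - (`|x|^-1 *: x); have Sv : SX v by rewrite /unit_sphere /= normrN normfZV.
have xv : `|x - v| = `|x| + 1.
  rewrite opprK -{1}[x]scale1r -scalerDl normrZ ger0_norm ?addr_ge0 ?invr_ge0 ?ltW//.
  by rewrite mulrDl mulVf ?gt_eqF // mul1r addrC.
have ub r : [set `|x - y| | y in SX] r -> r <= `|x| + 1.
  by move=> [y Sy <-]; rewrite -Sy ler_normB.
apply/le_anti/andP; split; first by apply: ge_sup => //; exists `|x - v|, v.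
by apply: ub_le_sup; [exists (`|x| + 1) | exists v].
Qed.

Lemma farthest_unit_sphereE (x : X) : x != 0 ->
  farthest SX x = [set y | `|y| = 1 /\ `|x - y| = `|x| + 1].
Proof. by move=> x0; rewrite /farthest rad_unit_sphere. Qed.

Lemma farthest_ray_diametral (u y : X) (t : R) : 0 < t -> `|u| = 1 -> `|y| = 1 ->
  `|t *: u - y| = t + 1 -> 2 <= `|u - y|.
Proof.
move=> t0 u1 y1 tuy; have [t_ge1|t_lt1] := leP 1 t.
- have : `|t *: u - y| <= (t - 1) + `|u - y|.
    have -> : t *: u - y = (t - 1) *: u + (u - y).
      by rewrite scalerBl scale1r addrA subrK.
    by rewrite (le_trans (ler_normD _ _)) // normrZ u1 mulr1 ger0_norm ?subr_ge0.
  by rewrite tuy; lra.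
- have : `|t *: u - y| <= t * `|u - y| + (1 - t).
    have -> : t *: u - y = t *: (u - y) - (1 - t) *: y.
      by rewrite scalerBr scalerBl scale1r opprB addrA subrK.
    rewrite (le_trans (ler_normB _ _)) // !normrZ y1 mulr1.
    by rewrite gtr0_norm // ger0_norm // subr_ge0 ltW.
  rewrite tuy => le_t; rewrite -(ler_pM2l t0); lra.
Qed.

Lemma rotund_diametral (u y : X) : rotund R X -> `|u| = 1 -> `|y| = 1 ->
  2 <= `|u - y| -> y = - u.
Proof.
move=> rot u1 y1 uy2; apply/eqP; rewrite -[y]opprK eqr_opp eq_sym.
apply/negPn/negP => neq.
have := rot u (- y) u1 (etrans (normrN y) y1) neq.
rewrite normrZ ger0_norm ?invr_ge0 //; lra.
Qed.

Lemma rotund_farthest_unit_sphere (x : X) : rotund R X -> x != 0 ->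
  farthest SX x = [set - (`|x|^-1 *: x)].
Proof.
move=> rot x0; have xp : 0 < `|x| by rewrite normr_gt0.
set u := `|x|^-1 *: x; have u1 : `|u| = 1 by exact: normfZV.
have xu : x = `|x| *: u by rewrite /u scalerA mulfV ?gt_eqF // scale1r.
rewrite farthest_unit_sphereE //; apply/seteqP; split => y /=.
- move=> [y1 xy]; rewrite (rotund_diametral _ _ rot u1 y1) //.
  by apply: (farthest_ray_diametral _ _ _ xp) => //; rewrite -xu.
- move=> ->; split; first by rewrite normrN.
  rewrite opprK {1}xu -{2}[u]scale1r -scalerDl normrZ u1 mulr1.
  by rewrite ger0_norm // addr_ge0 // ltW.
Qed.

Lemma farthest_unit_sphere_face (z w : X) (t : R) : 0 < t ->
  `|z| = 1 -> `|w| = 1 -> `|z + w| = 2 -> farthest SX (- (t *: (z + w))) z.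
Proof.
move=> t0 z1 w1 zw2; have normx : `|- (t *: (z + w))| = 2 * t.
  by rewrite normrN normrZ zw2 gtr0_norm // mulrC.
have x0 : - (t *: (z + w)) != 0 by rewrite -normr_gt0 normx mulr_gt0.
rewrite farthest_unit_sphereE // normx; split => //.
apply/le_anti/andP; split; first by rewrite -normx -z1 ler_normB.
have : `|(t + 1) *: (z + w)| <= `|- (t *: (z + w)) - z| + `|w|.
  have -> : (t + 1) *: (z + w) = - (- (t *: (z + w)) - z) + w.
    by rewrite opprB opprK scalerDl scale1r addrA; congr (_ + _); exact: addrC.
  by rewrite (le_trans (ler_normD _ _)) // normrN.
rewrite normrZ zw2 w1 gtr0_norm ?addr_gt0 //; lra.
Qed.

Lemma not_rotund_face : ~ rotund R X ->
  exists z w : X, [/\ `|z| = 1, `|w| = 1, z != w & `|z + w| = 2].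
Proof.
move=> /existsNP[z /existsNP[w /not_implyP[z1 /not_implyP[w1 /not_implyP[zw]]]]].
move=> /negP; rewrite -leNgt normrZ ger0_norm ?invr_ge0 // => half_ge1.
exists z, w; split => //; apply/le_anti/andP; split.
  by rewrite (le_trans (ler_normD _ _)) // z1 w1.
lra.
Qed.

End FarthestPointsOfTheUnitSphere.

Section UniquelyRemotalUnitSphere.
Context {R : realType} {X : normedModType R}.
Local Notation SX := (unit_sphere R X).

Lemma uniquely_remotal_sub (F A B : set X) :
  A `<=` B -> uniquely_remotal F B -> uniquely_remotal F A.
Proof. by move=> AB FB x /AB /FB. Qed.

Lemma rotund_uniquely_remotal (A : set X) :
  rotund R X -> A `<=` setT `\ 0 -> uniquely_remotal SX A.
Proof.
move=> rot A_nz x /A_nz[_ /eqP x0]; exists (- (`|x|^-1 *: x)).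
exact: rotund_farthest_unit_sphere.
Qed.

Lemma uniquely_remotal_sphere_rotund (A : set X) (a : R) : 0 < a ->
  [set x | `|x| = a] `<=` A -> uniquely_remotal SX A -> rotund R X.
Proof.
move=> a0 sphere_A SX_A; apply: contrapT => /not_rotund_face[z [w [z1 w1 zw zw2]]].
have t0 : 0 < a / 2 by rewrite divr_gt0.
have [y Qy] : exists y, farthest SX (- ((a / 2) *: (z + w))) = [set y].
  apply/SX_A/sphere_A; rewrite /= normrN normrZ zw2 gtr0_norm //.
  by rewrite -mulrA mulVf ?mulr1.
have := farthest_unit_sphere_face _ _ _ t0 z1 w1 zw2.
have := farthest_unit_sphere_face _ _ _ t0 w1 z1; rewrite addrC => /(_ zw2).
by rewrite Qy => /= wy zy; rewrite zy wy eqxx in zw.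
Qed.

End UniquelyRemotalUnitSphere.

Theorem theorem3p1 (R : realType) (X : completeNormedModType R) :
  [<-> rotund R X;
       uniquely_remotal (unit_sphere R X) (setT `\ (0 : X));
       uniquely_remotal (unit_sphere R X) (setT `\` unit_ball R X);
       uniquely_remotal (unit_sphere R X) (unit_ball R X `\ (0 : X));
       (forall k : R, 0 < k < 1 ->
          uniquely_remotal (unit_sphere R X)
            (unit_ball R X `\` [set x | `|x| <= k]));
       (exists2 k : R, 0 < k < 1 &
          uniquely_remotal (unit_sphere R X)
            (unit_ball R X `\` [set x | `|x| <= k]));
       uniquely_remotal (unit_sphere R X) (unit_sphere R X)].
Proof.
have norm_gt0_neq0 (x : X) : 0 < `|x| -> x <> 0 by rewrite normr_gt0 => /eqP.
have sphere1_annulus k : k < 1 ->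
    [set x : X | `|x| = 1] `<=` unit_ball R X `\` [set x | `|x| <= k].
  move=> k1 x /= x1; split; first by rewrite /unit_ball /= x1.
  by apply/negP; rewrite -ltNge x1.
tfae.
- by move=> rot; apply: rotund_uniquely_remotal.
- apply: uniquely_remotal_sub => x [_ /= x_out]; split => // x0.
  by apply: x_out; rewrite x0 /unit_ball /= normr0.
- move=> SX_out; apply: rotund_uniquely_remotal => [|x [_ //]].
  apply: (uniquely_remotal_sphere_rotund _ 2 _ _ SX_out) => // x /= x2.
  by split => //; apply/negP; rewrite -ltNge x2 ltr1n.
- move=> SX_ball k /andP[k0 k1]; apply: rotund_uniquely_remotal.
    apply: (uniquely_remotal_sphere_rotund _ 1 _ _ SX_ball) => // x /= x1.
    by split; [rewrite /unit_ball /= x1 | apply: norm_gt0_neq0; rewrite x1].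
  by move=> x [_ /= /negP]; rewrite -ltNge => /(lt_trans k0) /norm_gt0_neq0.
- by move=> SX_annulus; exists 2^-1; [|apply: SX_annulus]; apply/andP; split; lra.
- move=> [k /andP[k0 k1] SX_annulus]; apply: rotund_uniquely_remotal.
    exact: (uniquely_remotal_sphere_rotund _ 1 _ (sphere1_annulus _ k1)).
  by move=> x /= x1; split => //; apply: norm_gt0_neq0; rewrite x1.
- by apply: (uniquely_remotal_sphere_rotund _ 1).
Qed.
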